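(* Let $2\le p\le q$, $n=p+q$. Let $W_1,\ldots,W_l \subset \mathbb{R}^{p,q}$ be a finite family of pairwise distinct, non-empty open sets of intersection type. Then $W_1 \cup \cdots \cup W_l$ is not connected if and only if one of the following holds: (1) there exist $v \in \mathcal{C} \setminus \{0\}$, real numbers $\alpha_1,\ldots,\alpha_l$ and $1 \leq k_0 \leq l-1$ such that, up to permutation of the indices, $\alpha_1 > \cdots > \alpha_{k_0} \geq \alpha_{k_0+1} > \cdots > \alpha_l$, $W_i = H_{v,\alpha_i}$ for all $i \leq k_0$ and $W_i = H_{-v,-\alpha_i}$ for all $i > k_0$; or (2) $l=2$ and, up to permutation, $W_1 = v + U_S$ and $W_2 = v + U_T$ for some $v \in \mathbb{R}^{p,q}$.
   Context: On $\mathbb{R}^{p,q}$: $b(v,w) = -v_1w_1 - \cdots - v_pw_p + v_{p+1}w_{p+1} + \cdots + v_nw_n$, $q(v)=b(v,v)$, $\mathcal{C}=\{q=0\}$, $U_S=\{q>0\}$, $U_T=\{q<0\}$, and for $v\in\mathcal{C}\setminus\{0\}$, $\alpha\in\mathbb{R}$, $H_{v,\alpha}=\{w: b(v,w)>\alpha\}$. An open subset of $\mathbb{R}^{p,q}$ is of intersection type if it is of the form $v_0+U_S$ or $v_0+U_T$ for some $v_0\in\mathbb{R}^{p,q}$, or $H_{v_0,\alpha}$ for some $v_0\in\mathcal{C}\setminus\{0\}$ and $\alpha\in\mathbb{R}$. *)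

From Stdlib Require Import Reals.
From mathcomp Require Import all_boot.
Set Implicit Arguments. Unset Strict Implicit. Unset Printing Implicit Defensive.

Local Open Scope R_scope.

Definition pt (p q : nat) := 'I_(p + q) -> R.
Definition pset (p q : nat) := pt p q -> Prop.

Definition vadd p q (v w : pt p q) : pt p q := fun i => v i + w i.
Definition vopp p q (v : pt p q) : pt p q := fun i => - v i.
Definition vzero p q : pt p q := fun _ => 0.

Definition bform p q (v w : pt p q) : R :=
  \big[Rplus/0]_(i < p + q)
     ((if (i < p)%N then -1 else 1) * v i * w i).
Definition qform p q (v : pt p q) : R := bform v v.

Definition cone p q : pset p q := fun v => qform v = 0.
Definition US p q : pset p q := fun v => qform v > 0.
Definition UT p q : pset p q := fun v => qform v < 0.
Definition Hset p q (v : pt p q) (alpha : R) : pset p q :=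
  fun w => bform v w > alpha.

Definition translate p q (v0 : pt p q) (A : pset p q) : pset p q :=
  fun w => exists u, A u /\ w = vadd v0 u.

Definition set_eq p q (A B : pset p q) : Prop := forall x, A x <-> B x.

(* Euclidean topology (via the equivalent sup-norm balls) *)
Definition is_open p q (U : pset p q) : Prop :=
  forall x, U x -> exists eps, eps > 0 /\
    forall y : pt p q, (forall i, Rabs (y i - x i) < eps) -> U y.

Definition is_connected p q (A : pset p q) : Prop :=
  ~ exists U1 U2 : pset p q,
      is_open U1 /\ is_open U2 /\
      (forall x, A x -> U1 x \/ U2 x) /\
      (exists x, A x /\ U1 x) /\ (exists x, A x /\ U2 x) /\
      (forall x, A x -> U1 x -> U2 x -> False).

Definition intersection_type p q (W : pset p q) : Prop :=
  (exists v0, set_eq W (translate v0 (@US p q))) \/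
  (exists v0, set_eq W (translate v0 (@UT p q))) \/
  (exists v0 alpha, cone v0 /\ v0 <> @vzero p q /\ set_eq W (Hset v0 alpha)).

Definition union_fam p q l (W : 'I_l -> pset p q) : pset p q :=
  fun x => exists i, W i x.

(* Each piece of intersection type is connected: half-spaces are convex, and [v + U_S],
   [v + U_T] are joined to a point on a coordinate axis by polygonal paths (this uses
   [p, q >= 2]).  Hence a separation of the union splits the indices into two nonempty
   classes, and pieces from different classes are disjoint.  Explicit witnesses show that
   two pieces are disjoint only if they are [v + U_S] and [v + U_T] with the same vertex, or
   opposite half-spaces [H_{v,a}] and [H_{-v,-b}] with [b <= a].  If some piece is a
   translated cone, every other piece must be its partner, so [l = 2]; otherwise all pieces
   are half-spaces normal to [v] or [-v], and sorting the offsets inside each class gives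
   the chain of condition (1).  Conversely both configurations come with an obvious
   separation. *)

From HB Require Import structures.
From Stdlib Require Import Reals Lra Lia Classical FunctionalExtensionality ClassicalEpsilon.
From mathcomp Require Import all_boot zify.

Set Implicit Arguments. Unset Strict Implicit. Unset Printing Implicit Defensive.
Local Open Scope R_scope.

Lemma Rplus_assoc_law : associative Rplus.
Proof. by move=> *; rewrite Rplus_assoc. Qed.
HB.instance Definition _ :=
  Monoid.isComLaw.Build R 0 Rplus Rplus_assoc_law Rplus_comm Rplus_0_l.

Section RealSums.
Variable n : nat.
Implicit Types F G : 'I_n -> R.

Lemma sumR_comb a b F G :
  \big[Rplus/0]_(i < n) (a * F i + b * G i) =
  a * \big[Rplus/0]_(i < n) F i + b * \big[Rplus/0]_(i < n) G i.
Proof.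
apply: (big_rec3 (fun x y z => x = a * y + b * z)); first ring.
by move=> i x y z _ ->; ring.
Qed.

Lemma sumR_le F G : (forall i, F i <= G i) ->
  \big[Rplus/0]_(i < n) F i <= \big[Rplus/0]_(i < n) G i.
Proof.
move=> H; apply: (big_rec2 (fun x y => x <= y)); first lra.
by move=> i x y _ hxy; have := H i; lra.
Qed.

Lemma sumR_ge0 F : (forall i, 0 <= F i) -> 0 <= \big[Rplus/0]_(i < n) F i.
Proof.
move=> H; apply: (big_rec (fun x => 0 <= x)); first lra.
by move=> i x _ hx; have := H i; lra.
Qed.

Lemma sumR_ge_term F k : (forall i, 0 <= F i) -> F k <= \big[Rplus/0]_(i < n) F i.
Proof.
move=> H; rewrite (bigD1 k) //= -[X in X <= _]Rplus_0_r; apply: Rplus_le_compat_l.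
by apply: (big_rec (fun x => 0 <= x)) => [|i x _ hx]; [lra | have := H i; lra].
Qed.

Lemma sumR_single F k : (forall i, i != k -> F i = 0) ->
  \big[Rplus/0]_(i < n) F i = F k.
Proof. by move=> H; rewrite (bigD1 k) //= big1 ?Rplus_0_r // => i /H. Qed.

End RealSums.

Section Vectors.
Variables p q : nat.
Notation pt := (pt p q).
Implicit Types v w x y z a b d : pt.

Definition sg (i : 'I_(p + q)) : R := if (i < p)%N then -1 else 1.
Definition dot v w : R := \big[Rplus/0]_(i < p + q) (v i * w i).
Definition vsign v : pt := fun i => sg i * v i.
Definition vscale (c : R) v : pt := fun i => c * v i.
Definition vcomb (r : R) x (s : R) y : pt := fun i => r * x i + s * y i.
Definition axis (c : R) (k : 'I_(p + q)) : pt := fun i => if i == k then c else 0.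

Lemma sg_lt (k : 'I_(p + q)) : (k < p)%N -> sg k = -1.
Proof. by rewrite /sg => ->. Qed.

Lemma sg_ge (k : 'I_(p + q)) : ~~ (k < p)%N -> sg k = 1.
Proof. by rewrite /sg => /negbTE ->. Qed.

Lemma vector_neq a b : a <> b -> exists i, a i <> b i.
Proof.
move=> hab; apply: NNPP => H; apply: hab; apply: functional_extensionality => i.
by apply: NNPP => h; apply: H; exists i.
Qed.

Lemma dot_sym v w : dot v w = dot w v.
Proof. by apply: eq_bigr => i _; ring. Qed.

Lemma dot_comb v r x s y : dot v (vcomb r x s y) = r * dot v x + s * dot v y.
Proof. by rewrite /dot -sumR_comb; apply: eq_bigr => i _; rewrite /vcomb; ring. Qed.

Lemma dot_self_gt0 v : v <> @vzero p q -> 0 < dot v v.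
Proof.
case/vector_neq => k hk.
have := @sumR_ge_term _ (fun i => v i * v i) k (fun i => Rle_0_sqr (v i)).
rewrite /vzero in hk; rewrite /dot; nra.
Qed.

Lemma bform_sym v w : bform v w = bform w v.
Proof. by apply: eq_bigr => i _; ring. Qed.

Lemma bform_comb v r x s y : bform v (vcomb r x s y) = r * bform v x + s * bform v y.
Proof. by rewrite /bform -sumR_comb; apply: eq_bigr => i _; rewrite /vcomb; ring. Qed.

Lemma bform_combl v r x s y : bform (vcomb r x s y) v = r * bform x v + s * bform y v.
Proof. by rewrite bform_sym bform_comb !(bform_sym v). Qed.

Lemma bform_scale v c w : bform v (vscale c w) = c * bform v w.
Proof.
transitivity (c * bform v w + 0 * bform v w); last ring.
by rewrite /bform -sumR_comb; apply: eq_bigr => i _; rewrite /vscale; ring.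
Qed.

Lemma bform_scalel v c w : bform (vscale c w) v = c * bform w v.
Proof. by rewrite bform_sym bform_scale bform_sym. Qed.

Lemma bform_opp v w : bform (vopp v) w = - bform v w.
Proof.
have -> : vopp v = vscale (-1) v.
  by apply: functional_extensionality => i; rewrite /vopp /vscale; ring.
by rewrite bform_scalel; ring.
Qed.

Lemma bform_sign v w : bform v (vsign w) = dot v w.
Proof. by apply: eq_bigr => i _; rewrite /vsign /sg; case: (i < p)%N; ring. Qed.

Lemma bform_axis d c (k : 'I_(p + q)) : bform d (axis c k) = c * sg k * d k.
Proof.
rewrite /bform (sumR_single (k := k)) /axis ?eqxx /sg; first ring.
by move=> i /negbTE ->; ring.
Qed.

Lemma qform_comb r x s y :
  qform (vcomb r x s y) = r * r * qform x + 2 * r * s * bform x y + s * s * qform y.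
Proof. by rewrite /qform bform_comb !bform_combl (bform_sym y x); ring. Qed.

Lemma qform_scale c w : qform (vscale c w) = c * c * qform w.
Proof. by rewrite /qform bform_scale bform_scalel; ring. Qed.

Lemma qform_axis c (k : 'I_(p + q)) : qform (axis c k) = sg k * c * c.
Proof. by rewrite /qform bform_axis /axis eqxx; ring. Qed.

Lemma qform_sub z a : qform (vcomb 1 z (-1) a) = qform z - 2 * bform z a + qform a.
Proof. by rewrite qform_comb; ring. Qed.

Lemma mem_translate (P : pset p q) a z : translate a P z <-> P (vcomb 1 z (-1) a).
Proof.
split => [[u [hu ->]]|h].
  by have -> : vcomb 1 (vadd a u) (-1) a = u
    by apply: functional_extensionality => i; rewrite /vcomb /vadd; ring.
exists (vcomb 1 z (-1) a); split => //.
by apply: functional_extensionality => i; rewrite /vcomb /vadd; ring.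
Qed.

Definition time_part v : pt := fun i => if (i < p)%N then v i else 0.
Definition space_part v : pt := fun i => if (i < p)%N then 0 else v i.
Definition time_norm2 v := \big[Rplus/0]_(i < p + q) (if (i < p)%N then v i * v i else 0).
Definition space_norm2 v := \big[Rplus/0]_(i < p + q) (if (i < p)%N then 0 else v i * v i).

Lemma qform_time_space v : qform v = - time_norm2 v + space_norm2 v.
Proof.
transitivity (-1 * time_norm2 v + 1 * space_norm2 v); last ring.
by rewrite -sumR_comb; apply: eq_bigr => i _; rewrite /sg; case: (i < p)%N; ring.
Qed.

Lemma dot_time_space v : dot v v = time_norm2 v + space_norm2 v.
Proof.
transitivity (1 * time_norm2 v + 1 * space_norm2 v); last ring.
by rewrite -sumR_comb; apply: eq_bigr => i _; case: (i < p)%N; ring.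
Qed.

Lemma bform_space_part v : bform v (space_part v) = space_norm2 v.
Proof. by apply: eq_bigr => i _; rewrite /space_part /sg; case: (i < p)%N; ring. Qed.

Lemma qform_space_part v : qform (space_part v) = space_norm2 v.
Proof. by apply: eq_bigr => i _; rewrite /space_part /sg; case: (i < p)%N; ring. Qed.

Lemma bform_time_part v : bform v (time_part v) = - time_norm2 v.
Proof.
transitivity (-1 * time_norm2 v + 0 * time_norm2 v); last ring.
by rewrite -sumR_comb; apply: eq_bigr => i _; rewrite /time_part /sg; case: (i < p)%N; ring.
Qed.

Lemma qform_time_part v : qform (time_part v) = - time_norm2 v.
Proof.
transitivity (-1 * time_norm2 v + 0 * time_norm2 v); last ring.
by rewrite -sumR_comb; apply: eq_bigr => i _; rewrite /time_part /sg; case: (i < p)%N; ring.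
Qed.

Lemma cone_norm2_gt0 v : cone v -> v <> @vzero p q -> 0 < time_norm2 v /\ 0 < space_norm2 v.
Proof.
move=> hc /dot_self_gt0; rewrite dot_time_space; have := qform_time_space v.
by rewrite /cone in hc; rewrite hc; lra.
Qed.

End Vectors.

(** * Connectedness of the pieces *)

Section Segments.
Variables p q : nat.
Notation pt := (pt p q).
Notation pset := (pset p q).
Implicit Types (x y z u w : pt) (A U : pset).

Definition segment x y (t : R) : pt := fun i => x i + t * (y i - x i).
Definition on_segment A x y := forall t, 0 <= t <= 1 -> A (segment x y t).

Lemma segment0 x y : segment x y 0 = x.
Proof. by apply: functional_extensionality => i; rewrite /segment; ring. Qed.

Lemma segment1 x y : segment x y 1 = y.
Proof. by apply: functional_extensionality => i; rewrite /segment; ring. Qed.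

Lemma on_segment_sym A x y : on_segment A x y -> on_segment A y x.
Proof.
move=> h t ht; have -> : segment y x t = segment x y (1 - t).
  by apply: functional_extensionality => i; rewrite /segment; ring.
by apply: h; lra.
Qed.

Lemma segment_near_open U x y t : is_open U -> U (segment x y t) ->
  exists d, 0 < d /\ forall s, Rabs (s - t) < d -> U (segment x y s).
Proof.
move=> hU /hU [eps [he hball]].
set M := 1 + \big[Rplus/0]_(i < p + q) Rabs (y i - x i).
have hM : 0 < M by have := sumR_ge0 (fun i => Rabs_pos (y i - x i)); rewrite /M; lra.
exists (eps / M); split; first exact: Rdiv_lt_0_compat.
move=> s hs; apply: hball => i.
have hi : Rabs (y i - x i) <= M.
  by have := sumR_ge_term i (fun i => Rabs_pos (y i - x i)); rewrite /M; lra.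
have -> : segment x y s i - segment x y t i = (s - t) * (y i - x i) by rewrite /segment; ring.
rewrite Rabs_mult.
have : Rabs (s - t) * M < eps.
  have := Rmult_lt_compat_r M _ _ hM hs.
  by have -> : eps / M * M = eps by field; lra.
have := Rmult_le_compat_l _ _ _ (Rabs_pos (s - t)) hi; lra.
Qed.

Section SegmentSeparation.
Variables A U1 U2 : pset.
Hypotheses (hU1 : is_open U1) (hU2 : is_open U2)
  (hcov : forall x, A x -> U1 x \/ U2 x) (hdis : forall x, A x -> U1 x -> U2 x -> False).

(* The supremum of the parameters whose initial subsegment lies in [U1] must be 1. *)
Lemma on_segment_open_part x y : on_segment A x y -> U1 x -> U1 y.
Proof.
move=> hA hx.
set E := fun t => 0 <= t <= 1 /\ forall s, 0 <= s <= t -> U1 (segment x y s).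
have hE0 : E 0.
  by split=> [|s hs]; [lra | have -> : s = 0 by lra]; rewrite segment0.
have hbound : bound E by exists 1 => t [ht _]; lra.
have [tau [hub hlub]] := completeness E hbound (ex_intro _ 0 hE0).
have tau0 : 0 <= tau by apply: hub.
have tau1 : tau <= 1 by apply: hlub => t [ht _]; lra.
have below : forall s, 0 <= s < tau -> U1 (segment x y s).
  move=> s hs; apply: NNPP => hns; suff : tau <= s by lra.
  apply: hlub => t [ht hts]; apply: Rnot_lt_le => hst.
  by apply: hns; apply: hts; lra.
have hAt : A (segment x y tau) by apply: hA; lra.
have hU1t : U1 (segment x y tau).
  case: (hcov hAt) => // hU2t; exfalso.
  have [d [hd hnear]] := segment_near_open hU2 hU2t.
  have [tau_eq0|tau_pos] : tau = 0 \/ 0 < tau by lra.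
    by apply: (hdis hAt) => //; rewrite tau_eq0 segment0.
  set s := Rmax 0 (tau - d / 2).
  have hs : 0 <= s < tau by split; [apply: Rmax_l | apply: Rmax_lub_lt; lra].
  apply: (hdis (x := segment x y s)); [apply: hA; lra | exact: below | apply: hnear].
  by apply: Rabs_def1; have := Rmax_r 0 (tau - d / 2); rewrite -/s; lra.
have [d [hd hnear]] := segment_near_open hU1 hU1t.
have [tau_eq1|tau_lt1] : tau = 1 \/ tau < 1 by lra.
  by rewrite tau_eq1 segment1 in hU1t.
set t' := Rmin 1 (tau + d / 2).
have ht' : tau < t' by apply: Rmin_glb_lt; lra.
suff : t' <= tau by lra.
apply: hub; split=> [|s hs]; first by have := Rmin_l 1 (tau + d / 2); rewrite -/t'; lra.
have [hst|hst] : s < tau \/ tau <= s by lra.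
  by apply: below; lra.
by apply: hnear; apply: Rabs_def1; have := Rmin_r 1 (tau + d / 2); rewrite -/t'; lra.
Qed.

End SegmentSeparation.

Inductive chain A : pt -> pt -> Prop :=
| chain_refl x : chain A x x
| chain_step x y z : on_segment A x y -> chain A y z -> chain A x z.

Definition unsplittable A := forall U1 U2 : pset,
  is_open U1 -> is_open U2 -> (forall x, A x -> U1 x \/ U2 x) ->
  (forall x, A x -> U1 x -> U2 x -> False) ->
  (forall x, A x -> U1 x) \/ (forall x, A x -> U2 x).

Lemma chain_open_part A U1 U2 : is_open U1 -> is_open U2 ->
  (forall x, A x -> U1 x \/ U2 x) -> (forall x, A x -> U1 x -> U2 x -> False) ->
  forall x y, chain A x y -> (U1 x <-> U1 y).
Proof.
move=> o1 o2 hc hd x y; elim=> [//|a b c hab _ IH].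
split=> h; first by apply/IH; exact: (on_segment_open_part o1 o2 hc hd hab).
by apply: (on_segment_open_part o1 o2 hc hd (on_segment_sym hab)); apply/IH.
Qed.

Lemma unsplittable_of_chains A b : A b -> (forall x, A x -> chain A x b) -> unsplittable A.
Proof.
move=> hb hr U1 U2 o1 o2 hc hd.
have part x : A x -> U1 x <-> U1 b.
  by move=> hx; exact: (chain_open_part o1 o2 hc hd (hr x hx)).
case: (classic (U1 b)) => h; first by left => x /part ->.
by right => x hx; case: (hc x hx) => // /(part x hx).
Qed.

Lemma unsplittable_set_eq A B : set_eq A B -> unsplittable B -> unsplittable A.
Proof.
move=> he hB U1 U2 o1 o2 hcov hd.
have [h|h] := hB U1 U2 o1 o2 (fun x hx => hcov x (proj2 (he x) hx))
  (fun x hx => hd x (proj2 (he x) hx)).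
  by left => x /he /h.
by right => x /he /h.
Qed.

Lemma unsplittable_Hset v alpha : (exists x, Hset v alpha x) -> unsplittable (Hset v alpha).
Proof.
move=> [b hb]; apply: (unsplittable_of_chains hb) => x hx.
apply: (chain_step (y := b)); last exact: chain_refl.
move=> t ht; have -> : segment x b t = vcomb (1 - t) x t b.
  by apply: functional_extensionality => i; rewrite /segment /vcomb; ring.
rewrite /Hset bform_comb; rewrite /Hset in hx hb.
have [->|t_pos] : t = 0 \/ 0 < t by lra.
  by lra.
have := Rmult_lt_compat_l _ _ _ t_pos hb.
have : (1 - t) * alpha <= (1 - t) * bform v x by apply: Rmult_le_compat_l; lra.
lra.
Qed.

Lemma chain_translate A a u w : chain A u w -> chain (translate a A) (vadd a u) (vadd a w).
Proof.
elim=> [z|x y z hxy _ IH]; first exact: chain_refl.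
apply: chain_step IH => t ht; exists (segment x y t); split; first exact: hxy.
by apply: functional_extensionality => i; rewrite /segment /vadd; ring.
Qed.

Lemma unsplittable_translate A a b : A b -> (forall u, A u -> chain A u b) ->
  unsplittable (translate a A).
Proof.
move=> hb hr; apply: (unsplittable_of_chains (b := vadd a b)); first by exists b.
by move=> x [u [hu ->]]; apply: chain_translate; apply: hr.
Qed.

End Segments.

Section SignedForm.
Variables p q : nat.
Notation pt := (pt p q).
Notation pset := (pset p q).
Implicit Types (x y z u w : pt).
Variable neg : 'I_(p + q) -> bool.

(* The diagonal form that is negative exactly on [neg]; it is [q] or [-q] for the two
   natural choices of [neg], so [v + U_S] and [v + U_T] are treated at once. *)
Definition sgn i : R := if neg i then -1 else 1.
Definition sqform z : R := \big[Rplus/0]_(i < p + q) (sgn i * z i * z i).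
Definition sqform_pos : pset := fun z => 0 < sqform z.
Definition pos_part z : pt := fun i => if neg i then 0 else z i.
Definition supported_pos z := forall i, neg i -> z i = 0.

Lemma supported_pos_axis c k : ~~ neg k -> supported_pos (axis c k).
Proof. by move=> hk i hi; rewrite /axis; case: eqP => // E; move: hk; rewrite -E hi. Qed.

Lemma sqform_ge_term z k : supported_pos z -> ~~ neg k -> z k * z k <= sqform z.
Proof.
move=> hz hk; have -> : z k * z k = sgn k * z k * z k by rewrite /sgn (negbTE hk); ring.
apply: (@sumR_ge_term _ (fun i => sgn i * z i * z i)) => i.
rewrite /sgn; case: (boolP (neg i)) => hi; first by rewrite (hz i hi); lra.
by have := Rle_0_sqr (z i); rewrite /Rsqr; lra.
Qed.

Lemma on_segment_supported_pos u w : supported_pos u -> supported_pos w ->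
  (forall t, 0 <= t <= 1 -> exists j, ~~ neg j /\ segment u w t j <> 0) ->
  on_segment sqform_pos u w.
Proof.
move=> hu hw h t ht; have [j [hj hz]] := h t ht.
have h0 : supported_pos (segment u w t).
  by move=> i hi; rewrite /segment (hu i hi) (hw i hi); ring.
have := sqform_ge_term h0 hj; rewrite /sqform_pos; nra.
Qed.

(* Damping the negative coordinates only increases the form. *)
Lemma on_segment_pos_part z : sqform_pos z -> on_segment sqform_pos z (pos_part z).
Proof.
move=> hz t ht; apply: Rlt_le_trans hz _.
apply: sumR_le => i; rewrite /sgn /segment /pos_part.
case: (neg i); last by lra.
by have := Rle_0_sqr (z i); rewrite /Rsqr; nra.
Qed.

Lemma sqform_pos_coord z : sqform_pos z -> exists k, ~~ neg k /\ z k <> 0.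
Proof.
move=> hz; apply: NNPP => H.
suff : sqform z <= \big[Rplus/0]_(i < p + q) 0.
  by rewrite big1 // /sqform_pos in hz *; lra.
apply: sumR_le => i.
rewrite /sgn; case: (boolP (neg i)) => hi.
  by have := Rle_0_sqr (z i); rewrite /Rsqr; lra.
have -> : z i = 0 by apply: NNPP => hzi; apply: H; exists i.
lra.
Qed.

Lemma on_segment_to_axis z k : supported_pos z -> ~~ neg k -> z k <> 0 ->
  on_segment sqform_pos z (axis (z k) k).
Proof.
move=> hz hk hzk; apply: on_segment_supported_pos => //; first exact: supported_pos_axis.
by move=> t _; exists k; split => //; rewrite /segment /axis eqxx; lra.
Qed.

Lemma on_segment_axes c c' k k' : ~~ neg k -> ~~ neg k' -> k != k' -> c <> 0 -> c' <> 0 ->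
  on_segment sqform_pos (axis c k) (axis c' k').
Proof.
move=> hk hk' hkk hc hc'.
apply: on_segment_supported_pos; try exact: supported_pos_axis.
move=> t ht; have [t1|t_lt1] : t = 1 \/ t < 1 by lra.
  exists k'; split => //; rewrite /segment /axis eqxx eq_sym (negbTE hkk) t1; lra.
exists k; split => //; rewrite /segment /axis eqxx (negbTE hkk).
have : (1 - t) * c <> 0 by apply: Rmult_integral_contrapositive; split; lra.
lra.
Qed.

Section TwoPositiveAxes.
Variables k1 k2 : 'I_(p + q).
Hypotheses (hk1 : ~~ neg k1) (hk2 : ~~ neg k2) (hk12 : k1 != k2).

Lemma chain_axis c k : c <> 0 -> ~~ neg k -> chain sqform_pos (axis c k) (axis 1 k1).
Proof.
move=> hc hk; case: (eqVneq k k1) => [->|hkk1].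
  apply: (chain_step (y := axis 1 k2)); first by apply: on_segment_axes => //; lra.
  apply: (chain_step (y := axis 1 k1)); last exact: chain_refl.
  by apply: on_segment_axes => //; rewrite 1?eq_sym //; lra.
apply: (chain_step (y := axis 1 k1)); last exact: chain_refl.
by apply: on_segment_axes => //; lra.
Qed.

Lemma chain_sqform_pos z : sqform_pos z -> chain sqform_pos z (axis 1 k1).
Proof.
move=> hz; have [k [hk hzk]] := sqform_pos_coord hz.
have pos_part_k : pos_part z k = z k by rewrite /pos_part (negbTE hk).
apply: (chain_step (on_segment_pos_part hz)).
apply: (chain_step (y := axis (z k) k)); last exact: chain_axis.
rewrite -pos_part_k; apply: on_segment_to_axis; rewrite ?pos_part_k //.
by move=> i hi; rewrite /pos_part hi.
Qed.

Lemma unsplittable_translate_sqform_pos a : unsplittable (translate a sqform_pos).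
Proof.
apply: (unsplittable_translate (b := axis 1 k1)); last exact: chain_sqform_pos.
apply: Rlt_le_trans (sqform_ge_term (supported_pos_axis 1 hk1) hk1).
by rewrite /axis eqxx; lra.
Qed.

End TwoPositiveAxes.

End SignedForm.

Section ConnectedPieces.
Variables p q : nat.
Hypotheses (hp : (2 <= p)%N) (hq : (2 <= q)%N).
Notation pt := (pt p q).

Lemma unsplittable_US a : unsplittable (translate a (@US p q)).
Proof.
have h1 : (p < p + q)%N by rewrite -{1}(addn0 p) ltn_add2l; apply: leq_trans hq.
have h2 : (p.+1 < p + q)%N by rewrite -addn1 ltn_add2l.
apply: (@unsplittable_translate_sqform_pos p q (fun i => (i < p)%N) (Ordinal h1) (Ordinal h2)).
- by rewrite /= ltnn.
- by rewrite /= -leqNgt leqnSn.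
- by rewrite -val_eqE /= ltn_eqF.
Qed.

Lemma unsplittable_UT a : unsplittable (translate a (@UT p q)).
Proof.
have h1 : (0 < p + q)%N by apply: leq_trans (ltnW hp) (leq_addr q p).
have h2 : (1 < p + q)%N by apply: leq_trans hp (leq_addr q p).
set neg := fun i : 'I_(p + q) => ~~ (i < p)%N.
have sqform_neg z : sqform neg z = - qform z.
  transitivity (-1 * qform z + 0 * qform z); last ring.
  rewrite /qform /bform -sumR_comb; apply: eq_bigr => i _.
  by rewrite /sgn /sg /neg; case: (i < p)%N => /=; ring.
apply: (unsplittable_set_eq (B := translate a (sqform_pos neg))).
  by move=> z; rewrite !mem_translate /UT /sqform_pos sqform_neg; lra.
apply: (@unsplittable_translate_sqform_pos p q neg (Ordinal h1) (Ordinal h2)).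
- by rewrite /neg /= negbK; apply: ltnW.
- by rewrite /neg /= negbK.
- by [].
Qed.

Lemma unsplittable_intersection_type (W : pset p q) :
  intersection_type W -> (exists x, W x) -> unsplittable W.
Proof.
move=> [[a ha]|[[a ha]|[v [al [_ [_ ha]]]]]] [x hx].
- by apply: (unsplittable_set_eq ha); apply: unsplittable_US.
- by apply: (unsplittable_set_eq ha); apply: unsplittable_UT.
- apply: (unsplittable_set_eq ha); apply: unsplittable_Hset.
  by exists x; apply/ha.
Qed.

End ConnectedPieces.

(** * Pairwise intersections of pieces *)

Definition eventually (P : R -> Prop) := exists M, forall m, M <= m -> P m.

Lemma eventually_and (P Q : R -> Prop) :
  eventually P -> eventually Q -> eventually (fun m => P m /\ Q m).
Proof.
move=> [M1 h1] [M2 h2]; exists (Rmax M1 M2) => m hm.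
by split; [apply: h1; have := Rmax_l M1 M2 | apply: h2; have := Rmax_r M1 M2]; lra.
Qed.

Lemma eventually_ex (P : R -> Prop) : eventually P -> exists m, P m.
Proof. by move=> [M h]; exists M; apply: h; lra. Qed.

Lemma eventually_linear Y c : 0 < Y -> eventually (fun m => c < m * Y).
Proof.
move=> hY; exists (c / Y + 1) => m hm.
have := Rmult_le_compat_r _ _ _ (Rlt_le _ _ hY) hm.
have -> : (c / Y + 1) * Y = c + Y by field; lra.
lra.
Qed.

Lemma eventually_quadratic Y c Q : 0 < Y -> eventually (fun m => 0 < Y * m * m - 2 * m * c + Q).
Proof.
move=> hY.
have [M hM] := eventually_and (eventually_linear (2 * Rabs c + Rabs Q) hY)
  (ex_intro (fun M => forall m, M <= m -> 1 <= m) 1 (fun m h => h)).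
exists M => m /hM [hmY hm1].
have := Rle_abs c; have := Rle_abs (- Q); rewrite Rabs_Ropp; have := Rabs_pos Q.
nra.
Qed.

Section HalfSpaces.
Variables p q : nat.
Notation pt := (pt p q).
Implicit Types v w z a b : pt.

Lemma set_eq_sym (X Y : pset p q) : set_eq X Y -> set_eq Y X.
Proof. by move=> h x; split => /h. Qed.

Lemma set_eq_trans (X Y Z : pset p q) : set_eq X Y -> set_eq Y Z -> set_eq X Z.
Proof. by move=> h1 h2 x; split => [/h1/h2|/h2/h1]. Qed.

Lemma vscale_vscale c d v : vscale c (vscale d v) = vscale (c * d) v.
Proof. by apply: functional_extensionality => i; rewrite /vscale; ring. Qed.

Lemma cone_vscale c v : cone v -> cone (vscale c v).
Proof. by rewrite /cone qform_scale => ->; ring. Qed.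

Lemma vscale_neq0 c v : c <> 0 -> v <> @vzero p q -> vscale c v <> @vzero p q.
Proof.
move=> hc hv E; apply: hv; apply: functional_extensionality => i.
have : vscale c v i = 0 by rewrite E.
by rewrite /vscale => /Rmult_integral [].
Qed.

Lemma Hset_scale_pos v c beta : 0 < c -> set_eq (Hset (vscale c v) beta) (Hset v (beta / c)).
Proof.
move=> hc z; rewrite /Hset bform_scalel.
have e : c * (beta / c) = beta by field; lra.
split=> h; first by apply: (Rmult_lt_reg_l c) => //; rewrite e.
by have := Rmult_lt_compat_l c _ _ hc h; rewrite e.
Qed.

Lemma Hset_scale_neg v c beta : c < 0 ->
  set_eq (Hset (vscale c v) beta) (Hset (vopp v) (- (beta / c))).
Proof.
move=> hc z; rewrite /Hset bform_scalel bform_opp.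
have hc' : 0 < - c by lra.
split=> h.
  apply: (Rmult_lt_reg_l (- c)) => //.
  have -> : - c * - (beta / c) = beta by field; lra.
  lra.
have /(Rmult_lt_compat_l _ _ _ hc') : bform v z < beta / c by lra.
have -> : - c * (beta / c) = - beta by field; lra.
lra.
Qed.

Lemma Hset_nonempty v alpha : v <> @vzero p q -> exists z, Hset v alpha z.
Proof.
move=> /dot_self_gt0 hvv; exists (vscale ((Rabs alpha + 1) / dot v v) (vsign v)).
rewrite /Hset bform_scale bform_sign.
have -> : (Rabs alpha + 1) / dot v v * dot v v = Rabs alpha + 1 by field; lra.
by have := Rle_abs alpha; lra.
Qed.

End HalfSpaces.

Lemma sign_times_self r : exists s, s * s = 1 /\ s * r = Rabs r.
Proof.
have [hr|hr] := Rle_lt_dec 0 r.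
  by exists 1; rewrite Rabs_right; [split; ring | lra].
by exists (-1); rewrite Rabs_left; [split; ring | lra].
Qed.

Section Intersections.
Variables p q : nat.
Notation pt := (pt p q).
Notation pset := (pset p q).
Implicit Types v w z a b d : pt.

Definition meets (A B : pset) := exists z, A z /\ B z.

Lemma US_translate a z : translate a (@US p q) z <-> 0 < qform (vcomb 1 z (-1) a).
Proof. exact: mem_translate. Qed.

Lemma UT_translate a z : translate a (@UT p q) z <-> qform (vcomb 1 z (-1) a) < 0.
Proof. exact: mem_translate. Qed.

Lemma meets_US_US a b : (0 < q)%N -> meets (translate a (@US p q)) (translate b (@US p q)).
Proof.
move=> hq; have hk : (p < p + q)%N by rewrite -{1}(addn0 p) ltn_add2l.
set k := Ordinal hk; have sk : sg k = 1 by apply: sg_ge; rewrite /= ltnn.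
have [m [ha hb]] := eventually_ex (eventually_and
  (eventually_quadratic (a k) (qform a) Rlt_0_1)
  (eventually_quadratic (b k) (qform b) Rlt_0_1)).
exists (axis m k).
rewrite !US_translate !qform_sub qform_axis !(bform_sym (axis m k)) !bform_axis sk.
by split; lra.
Qed.

Lemma meets_UT_UT a b : (0 < p)%N -> meets (translate a (@UT p q)) (translate b (@UT p q)).
Proof.
move=> hp; have hk : (0 < p + q)%N by apply: leq_trans hp (leq_addr _ _).
set k := Ordinal hk; have sk : sg k = -1 by apply: sg_lt.
have [m [ha hb]] := eventually_ex (eventually_and
  (eventually_quadratic (a k) (- qform a) Rlt_0_1)
  (eventually_quadratic (b k) (- qform b) Rlt_0_1)).
exists (axis m k).
rewrite !UT_translate !qform_sub qform_axis !(bform_sym (axis m k)) !bform_axis sk.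
by split; lra.
Qed.

Lemma meets_US_Hset a v alpha : cone v -> v <> @vzero p q ->
  meets (translate a (@US p q)) (Hset v alpha).
Proof.
move=> hc hv; have [_ hY] := cone_norm2_gt0 hc hv.
have [m [hq hH]] := eventually_ex (eventually_and
  (eventually_quadratic (bform (space_part v) a) (qform a) hY) (eventually_linear alpha hY)).
exists (vscale m (space_part v)).
rewrite US_translate qform_sub qform_scale bform_scalel qform_space_part /Hset bform_scale
  bform_space_part.
by split; lra.
Qed.

Lemma meets_UT_Hset a v alpha : cone v -> v <> @vzero p q ->
  meets (translate a (@UT p q)) (Hset v alpha).
Proof.
move=> hc hv; have [hX _] := cone_norm2_gt0 hc hv.
have [m [hq hH]] := eventually_ex (eventually_and
  (eventually_quadratic (bform (time_part v) a) (- qform a) hX) (eventually_linear alpha hX)).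
exists (vscale (- m) (time_part v)).
rewrite UT_translate qform_sub qform_scale bform_scalel qform_time_part /Hset bform_scale
  bform_time_part.
by split; lra.
Qed.

Lemma mixed_coord_nonzero d : (0 < p)%N -> (0 < q)%N -> d <> @vzero p q ->
  exists j k : 'I_(p + q), [/\ (j < p)%N, ~~ (k < p)%N & 0 < Rabs (d j) + Rabs (d k)].
Proof.
move=> hp hq /vector_neq [i0 hi0]; rewrite /vzero in hi0.
have hkp : (p < p + q)%N by rewrite -{1}(addn0 p) ltn_add2l.
have h0 : (0 < p + q)%N by apply: leq_trans hp (leq_addr _ _).
have := Rabs_pos_lt _ hi0; have := Rabs_pos (d (Ordinal hkp)); have := Rabs_pos (d (Ordinal h0)).
case: (boolP (i0 < p)%N) => hi.
  by exists i0, (Ordinal hkp); split => //; [rewrite /= ltnn | lra].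
by exists (Ordinal h0), i0; split => //; lra.
Qed.

(* With [D = |d_j| + |d_k|], the vector [w = -s_j t e_j + s_k S e_k] for [S] large and
   [t = S + D/2] is timelike while [q(d + w) >= q(d) + S D - D^2/4 > 0]. *)
Lemma timelike_shift d : (0 < p)%N -> (0 < q)%N -> d <> @vzero p q ->
  exists w, qform w < 0 /\ 0 < qform (vcomb 1 d 1 w).
Proof.
move=> hp hq hd; have [j [k [hj hk hD]]] := mixed_coord_nonzero hp hq hd.
have [sj [sj2 hsj]] := sign_times_self (d j); have [sk [sk2 hsk]] := sign_times_self (d k).
set D := Rabs (d j) + Rabs (d k).
set S := (Rabs (qform d) + D * D / 4 + 1) / D.
have hD0 : 0 < D by [].
have hSD : S * D = Rabs (qform d) + D * D / 4 + 1 by rewrite /S; field; lra.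
have hS : 0 < S.
  apply: Rdiv_lt_0_compat => //.
  by have := Rabs_pos (qform d); have := Rle_0_sqr D; rewrite /Rsqr; lra.
set t := S + D / 2.
set w := vcomb (- sj * t) (axis 1 j) (sk * S) (axis 1 k).
have hjk : k != j by apply/eqP => E; move: hj hk; rewrite E => ->.
have hqw : qform w = S * S - t * t.
  rewrite /w qform_comb !qform_axis bform_axis /axis (negbTE hjk) sg_lt // sg_ge //.
  transitivity (- (sj * sj) * t * t + (sk * sk) * S * S); first ring.
  by rewrite sj2 sk2; ring.
have hbdw : bform d w = t * Rabs (d j) + S * Rabs (d k).
  rewrite /w bform_comb !bform_axis sg_lt // sg_ge // -hsj -hsk; ring.
exists w; rewrite qform_comb hqw hbdw; split; first by rewrite /t; nra.
have -> : 1 * 1 * qform d + 2 * 1 * 1 * (t * Rabs (d j) + S * Rabs (d k)) + 1 * 1 * (S * S - t * t)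
  = qform d + S * D + D * Rabs (d j) - D * D / 4 by rewrite /t /D; field.
have : 0 <= D * Rabs (d j) by apply: Rmult_le_pos; [lra | apply: Rabs_pos].
have := Rle_abs (- qform d); rewrite Rabs_Ropp; lra.
Qed.

Lemma meets_US_UT a b : (0 < p)%N -> (0 < q)%N -> a <> b ->
  meets (translate a (@US p q)) (translate b (@UT p q)).
Proof.
move=> hp hq hab; set d := vcomb 1 b (-1) a.
have hd : d <> @vzero p q.
  move=> E; apply: hab; apply: functional_extensionality => i.
  have : d i = 0 by rewrite E.
  by rewrite /d /vcomb; lra.
have [w [hw hdw]] := timelike_shift hp hq hd.
exists (vcomb 1 b 1 w); rewrite US_translate UT_translate.
have -> : vcomb 1 (vcomb 1 b 1 w) (-1) a = vcomb 1 d 1 w.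
  by apply: functional_extensionality => i; rewrite /d /vcomb; ring.
have -> : vcomb 1 (vcomb 1 b 1 w) (-1) b = w.
  by apply: functional_extensionality => i; rewrite /vcomb; ring.
by [].
Qed.

(* Since [b(v, vsign x) = <v, x>], orthogonalising [w] against [v] in the Euclidean product
   decouples the two linear conditions unless [w] is a positive multiple of [v]. *)
Lemma meets_Hset_Hset v w alpha beta : v <> @vzero p q -> w <> @vzero p q ->
  ~ (exists c, c < 0 /\ w = vscale c v) -> meets (Hset v alpha) (Hset w beta).
Proof.
move=> hv hw hn; have hvv := dot_self_gt0 hv.
set lam := dot v w / dot v v.
set u := vcomb 1 w (- lam) v.
have hvu : dot v u = 0 by rewrite /u dot_comb /lam; field; lra.
have [hu0|hu] := classic (u = @vzero p q).
  have hwl : w = vscale lam v.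
    apply: functional_extensionality => i.
    have : u i = 0 by rewrite hu0.
    by rewrite /u /vcomb /vscale; lra.
  have hl : 0 < lam.
    have [hl|[hl|hl]] := Rtotal_order lam 0 => //; exfalso.
      by apply: hn; exists lam.
    apply: hw; rewrite hwl hl.
    by apply: functional_extensionality => i; rewrite /vscale /vzero; ring.
  have [z hz] := Hset_nonempty (Rmax alpha (beta / lam)) hv.
  exists z; split; first by have := Rmax_l alpha (beta / lam); rewrite /Hset in hz *; lra.
  rewrite hwl; apply/(Hset_scale_pos v beta hl z).
  by have := Rmax_r alpha (beta / lam); rewrite /Hset in hz *; lra.
have huu := dot_self_gt0 hu.
have hwu : dot w u = dot u u.
  by rewrite [RHS]dot_comb (dot_sym u w) (dot_sym u v) hvu; ring.
set s := (Rabs alpha + 1) / dot v v.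
set t := (Rabs beta + 1 + Rabs (s * dot w v)) / dot u u.
exists (vcomb s (vsign v) t (vsign u)); rewrite /Hset !bform_comb !bform_sign hvu hwu.
have -> : s * dot v v = Rabs alpha + 1 by rewrite /s; field; lra.
have -> : t * dot u u = Rabs beta + 1 + Rabs (s * dot w v) by rewrite /t; field; lra.
have := Rle_abs alpha; have := Rle_abs beta; have := Rle_abs (- (s * dot w v)).
by rewrite Rabs_Ropp; split; lra.
Qed.

End Intersections.

Section DisjointPieces.
Variables p q : nat.
Hypotheses (hp : (0 < p)%N) (hq : (0 < q)%N).
Notation pt := (pt p q).
Notation pset := (pset p q).
Implicit Types (v : pt) (A B Y : pset).

Lemma meets_sym A B : meets A B -> meets B A.
Proof. by move=> [z [ha hb]]; exists z. Qed.

Lemma meets_set_eqr A B B' : set_eq B B' -> meets A B' -> meets A B.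
Proof. by move=> he [z [ha hb]]; exists z; split => //; apply/he. Qed.

Lemma meets_set_eql A A' B : set_eq A A' -> meets A' B -> meets A B.
Proof. by move=> he [z [ha hb]]; exists z; split => //; apply/he. Qed.

Lemma meets_Hset_opp v a b : v <> @vzero p q -> a < b -> meets (Hset v a) (Hset (vopp v) (- b)).
Proof.
move=> /dot_self_gt0 hvv hab; exists (vscale ((a + b) / 2 / dot v v) (vsign v)).
rewrite /Hset bform_opp !bform_scale bform_sign.
have -> : (a + b) / 2 / dot v v * dot v v = (a + b) / 2 by field; lra.
by split; lra.
Qed.

Lemma disjoint_US a Y : intersection_type Y -> ~ meets (translate a (@US p q)) Y ->
  set_eq Y (translate a (@UT p q)).
Proof.
move=> [[b hb]|[[b hb]|[v [al [hc [hv hb]]]]]] hd.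
- by case: hd; apply: (meets_set_eqr hb); exact: meets_US_US.
- have [-> //|hab] := classic (a = b).
  by case: hd; apply: (meets_set_eqr hb); exact: meets_US_UT.
- by case: hd; apply: (meets_set_eqr hb); exact: meets_US_Hset.
Qed.

Lemma disjoint_UT a Y : intersection_type Y -> ~ meets (translate a (@UT p q)) Y ->
  set_eq Y (translate a (@US p q)).
Proof.
move=> [[b hb]|[[b hb]|[v [al [hc [hv hb]]]]]] hd.
- have [<- //|hba] := classic (b = a).
  by case: hd; apply: (meets_set_eqr hb); apply: meets_sym; exact: meets_US_UT.
- by case: hd; apply: (meets_set_eqr hb); exact: meets_UT_UT.
- by case: hd; apply: (meets_set_eqr hb); exact: meets_UT_Hset.
Qed.

Lemma disjoint_Hset v alpha Y : cone v -> v <> @vzero p q -> intersection_type Y ->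
  ~ meets (Hset v alpha) Y -> exists c beta, c < 0 /\ set_eq Y (Hset (vscale c v) beta).
Proof.
move=> hcv hv [[b hb]|[[b hb]|[w [be [hc [hw hb]]]]]] hd.
- by case: hd; apply: (meets_set_eqr hb); apply: meets_sym; exact: meets_US_Hset.
- by case: hd; apply: (meets_set_eqr hb); apply: meets_sym; exact: meets_UT_Hset.
- have [[c [hc0 hwc]]|hn] := classic (exists c, c < 0 /\ w = vscale c v).
    by exists c, be; rewrite -hwc.
  by case: hd; apply: (meets_set_eqr hb); exact: meets_Hset_Hset.
Qed.

End DisjointPieces.

(** * Sorting the offsets *)

Section BlockSort.
Local Open Scope nat_scope.
Variable l : nat.
Variables (inS : 'I_l -> bool) (key : 'I_l -> R).
Hypotheses
  (hcross : forall s t, inS s -> ~~ inS t -> Rle (key t) (key s))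
  (hinjS : forall s s', inS s -> inS s' -> s <> s' -> key s <> key s')
  (hinjT : forall t t', ~~ inS t -> ~~ inS t' -> t <> t' -> key t <> key t')
  (hS : exists s, inS s) (hT : exists t, ~~ inS t).

Definition key_ltb (i x : 'I_l) : bool := if Rlt_dec (key i) (key x) then true else false.

Lemma key_ltbP i x : key_ltb i x <-> Rlt (key i) (key x).
Proof. by rewrite /key_ltb; case: Rlt_dec. Qed.

Lemma key_ltbb i : key_ltb i i = false.
Proof. by apply/negbTE/negP => /key_ltbP; lra. Qed.

Lemma key_inj_block i j : inS i = inS j -> i <> j -> key i <> key j.
Proof. by case: (boolP (inS i)) => hi hij; [apply: hinjS | apply: hinjT]; rewrite // -hij. Qed.

Definition nS := #|[set x | inS x]|.

(* Rank inside the block of [i] for the decreasing order of [key], the [S]-block first. *)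
Definition rank (i : 'I_l) : nat :=
  if inS i then #|[set x | inS x && key_ltb i x]|
  else nS + #|[set x | ~~ inS x && key_ltb i x]|.

Lemma nS_le : (nS <= l)%N.
Proof. by have := max_card [set x | inS x]; rewrite card_ord. Qed.

Lemma card_notS : #|[set x | ~~ inS x]| = (l - nS)%N.
Proof.
have e : #|[set x | ~~ inS x]| = #|~: [set x | inS x]| by apply: eq_card => x; rewrite !inE.
by rewrite e -[in RHS](card_ord l) -(cardsC [set x | inS x]) /nS addKn.
Qed.

Lemma rank_S i : inS i -> (rank i < nS)%N.
Proof.
move=> hi; rewrite /rank hi; apply: proper_card; apply/properP; split.
  by apply/subsetP => x; rewrite !inE => /andP[].
by exists i; rewrite !inE ?hi // key_ltbb andbF.
Qed.

Lemma rank_T i : ~~ inS i -> (nS <= rank i < l)%N.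
Proof.
move=> hi; rewrite /rank (negbTE hi) leq_addr /= -ltn_subRL.
rewrite -card_notS; apply: proper_card; apply/properP; split.
  by apply/subsetP => x; rewrite !inE => /andP[].
by exists i; rewrite !inE ?hi // key_ltbb andbF.
Qed.

Lemma rank_lt i : (rank i < l)%N.
Proof.
case: (boolP (inS i)) => hi; last by case/andP: (rank_T hi).
exact: leq_trans (rank_S hi) nS_le.
Qed.

Lemma inS_rank i : inS i = (rank i < nS)%N.
Proof.
case: (boolP (inS i)) => hi; first by rewrite rank_S.
by case/andP: (rank_T hi); rewrite leqNgt => /negbTE ->.
Qed.

Lemma rank_mono x y : inS x = inS y -> Rlt (key y) (key x) -> (rank x < rank y)%N.
Proof.
move=> hxy hlt.
have key_sets b : inS x = b ->
    (#|[set z | (inS z == b) && key_ltb x z]| < #|[set z | (inS z == b) && key_ltb y z]|)%N.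
  move=> hb; apply: proper_card; apply/properP; split.
    apply/subsetP => z; rewrite !inE => /andP[-> /key_ltbP h] /=.
    by apply/key_ltbP; lra.
  exists x; first by rewrite !inE hb eqxx /=; apply/key_ltbP.
  by rewrite !inE key_ltbb andbF.
rewrite /rank -hxy; case: (boolP (inS x)) => hx.
  have := key_sets true hx.
  have e w : [set z | (inS z == true) && key_ltb w z] = [set z | inS z && key_ltb w z].
    by apply/setP => z; rewrite !inE eqb_id.
  by rewrite !e.
have := key_sets false (negbTE hx).
have e w : [set z | (inS z == false) && key_ltb w z] = [set z | ~~ inS z && key_ltb w z].
  by apply/setP => z; rewrite !inE eqbF_neg.
by rewrite !e ltn_add2l.
Qed.

Lemma rank_inj : injective rank.
Proof.
move=> x y hxy; apply: NNPP => hne.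
have hs : inS x = inS y by rewrite !inS_rank hxy.
have [h|[h|h]] := Rtotal_order (key x) (key y).
- by have := rank_mono (esym hs) h; rewrite hxy ltnn.
- exact: key_inj_block hs hne h.
- by have := rank_mono hs h; rewrite hxy ltnn.
Qed.

Definition rank_ord (i : 'I_l) : 'I_l := Ordinal (rank_lt i).

Lemma block_sort : exists (alpha : 'I_l -> R) (k : nat) (sigma : 'I_l -> 'I_l),
  [/\ (1 <= k)%N, (k <= l - 1)%N, bijective sigma,
      (forall i j : 'I_l, nat_of_ord j = (nat_of_ord i).+1 ->
         if (nat_of_ord j == k)%N then Rge (alpha i) (alpha j) else Rgt (alpha i) (alpha j)) &
      (forall i : 'I_l, alpha i = key (sigma i) /\ inS (sigma i) = (i < k)%N)].
Proof.
have [g hrg hgr] : bijective rank_ord.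
  by apply: injF_bij => x y /(congr1 val) /= /rank_inj.
have rank_g i : rank (g i) = i by rewrite -[in RHS](hgr i).
have inS_g i : inS (g i) = (i < nS)%N by rewrite inS_rank rank_g.
exists (fun i => key (g i)), nS, g; split.
- by case: hS => s /rank_S; apply: leq_ltn_trans.
- case: hT => t /rank_T /andP [h1 h2].
  have hnl := leq_ltn_trans h1 h2.
  by rewrite subn1 -ltnS prednK // (leq_ltn_trans (leq0n _) hnl).
- by exists rank_ord.
- move=> i j hij; case: eqP => hj.
    apply: Rle_ge; apply: hcross; first by rewrite inS_g -ltnS -hij hj.
    by rewrite inS_g hj ltnn.
  have hs : inS (g i) = inS (g j).
    rewrite !inS_g hij; apply/idP/idP => h; last exact: ltn_trans (ltnSn i) h.
    by rewrite ltn_neqAle h andbT; apply/eqP => E; apply: hj; rewrite hij.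
  have hne : g i <> g j by move=> /(congr1 rank); rewrite !rank_g hij => /n_Sn.
  have [h|[h|h]] := Rtotal_order (key (g i)) (key (g j)) => //.
    by have := rank_mono (esym hs) h; rewrite !rank_g hij ltnNge leqnSn.
  by case: (key_inj_block hs hne h).
- by move=> i; split => //; rewrite inS_g.
Qed.

End BlockSort.

(** * The two disconnected configurations *)

Definition nested_halfspaces p q l (W : 'I_l -> pset p q) : Prop :=
  exists (v : pt p q) (alpha : 'I_l -> R) (k0 : nat) (sigma : 'I_l -> 'I_l),
    cone v /\ v <> @vzero p q /\
    (1 <= k0)%N /\ (k0 <= l - 1)%N /\ bijective sigma /\
    (forall i j : 'I_l, nat_of_ord j = (nat_of_ord i).+1 ->
       if (nat_of_ord j == k0)%N then alpha i >= alpha j else alpha i > alpha j) /\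
    (forall i : 'I_l,
       if (i < k0)%N then set_eq (W (sigma i)) (Hset v (alpha i))
       else set_eq (W (sigma i)) (Hset (vopp v) (- alpha i))).

Definition opposite_cones p q l (W : 'I_l -> pset p q) : Prop :=
  l = 2%N /\ exists (i j : 'I_l) (v : pt p q),
    i <> j /\ set_eq (W i) (translate v (@US p q)) /\ set_eq (W j) (translate v (@UT p q)).

Lemma step_nonincreasing l (alpha : 'I_l -> R) (k0 : nat) :
  (forall i j : 'I_l, nat_of_ord j = (nat_of_ord i).+1 ->
     if (nat_of_ord j == k0)%N then alpha i >= alpha j else alpha i > alpha j) ->
  forall i j : 'I_l, (i <= j)%N -> alpha j <= alpha i.
Proof.
move=> H; suff S d (i j : 'I_l) : nat_of_ord j = (i + d)%N -> alpha j <= alpha i.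
  by move=> i j hij; apply: (S (j - i)%N); rewrite subnKC.
elim: d i j => [|d IH] i j hj.
  have -> : j = i by apply: val_inj; rewrite /= hj addn0.
  lra.
have hlt : (i + d < l)%N by apply: ltn_trans (ltn_ord j); rewrite hj addnS ltnSn.
have := IH i (Ordinal hlt) erefl.
have := H (Ordinal hlt) j; rewrite hj addnS => /(_ erefl).
by case: (_ == _) => /=; lra.
Qed.

Lemma ord2_other (i j k : 'I_2) : i <> j -> k = i \/ k = j.
Proof.
move: i j k => [[|[|?]] hi] [[|[|?]] hj] [[|[|?]] hk] //= hij;
  try (by left; apply: val_inj); try (by right; apply: val_inj).
all: by case: hij; apply: val_inj.
Qed.

Lemma is_open_indexed_union p q (I : Type) (P : I -> Prop) (V : I -> pset p q) :
  (forall i, is_open (V i)) -> is_open (fun x => exists i, P i /\ V i x).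
Proof.
move=> hV x [i [hi /hV [eps [he hball]]]].
by exists eps; split => // y /hball hy; exists i.
Qed.

Section Disconnected.
Variables p q l : nat.
Variable W : 'I_l -> pset p q.
Hypotheses (hne : forall i, exists x, W i x) (hopen : forall i, is_open (W i)).

Lemma nested_halfspaces_disconnected : nested_halfspaces W -> ~ is_connected (union_fam W).
Proof.
move=> [v [alpha [k0 [sigma [_ [_ [hk1 [hk2 [[g _ hgs] [hstep hW]]]]]]]]]] hc; apply: hc.
have hkl : (k0 < l)%N by lia.
have hl0 : (0 < l)%N by lia.
exists (fun x => exists i : 'I_l, (i < k0)%N /\ W (sigma i) x),
       (fun x => exists i : 'I_l, ~~ (i < k0)%N /\ W (sigma i) x).
do 2 (split; first by apply: is_open_indexed_union => i).
split.
  move=> x [k hx]; rewrite -(hgs k) in hx.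
  by case: (boolP (g k < k0)%N) => h; [left | right]; exists (g k).
split.
  have [x hx] := hne (sigma (Ordinal hl0)).
  by exists x; split; [exists (sigma (Ordinal hl0)) | exists (Ordinal hl0)].
split.
  have [x hx] := hne (sigma (Ordinal hkl)).
  by exists x; split; [exists (sigma (Ordinal hkl)) | exists (Ordinal hkl); rewrite /= ltnn].
move=> x _ [i [hi hxi]] [j [hj hxj]].
have := hW i; rewrite hi => /(_ x) [/(_ hxi) h1 _].
have := hW j; rewrite (negbTE hj) => /(_ x) [/(_ hxj) h2 _].
rewrite /Hset bform_opp in h1 h2.
have hij : (i <= j)%N by apply: ltnW; apply: leq_trans hi _; rewrite leqNgt.
by have := step_nonincreasing hstep hij; lra.
Qed.

Lemma opposite_cones_disconnected : opposite_cones W -> ~ is_connected (union_fam W).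
Proof.
move=> [hl [i [j [v [hij [hi hj]]]]]] hc; apply: hc.
exists (W i), (W j); do 2 (split => //).
split.
  by move=> x [k hk]; subst l; case: (ord2_other k hij) => E; rewrite E in hk; [left | right].
split; first by have [x hx] := hne i; exists x; split => //; exists i.
split; first by have [x hx] := hne j; exists x; split => //; exists j.
by move=> x _ /hi h1 /hj h2; move: h1 h2; rewrite !mem_translate /US /UT; lra.
Qed.

End Disconnected.

(** * Separations of the union *)

Lemma card_ord_two l (k j : 'I_l) : k <> j -> (forall m, m = k \/ m = j) -> l = 2%N.
Proof.
move=> hkj H.
have e : [set: 'I_l] = [set k; j].
  by apply/setP => m; rewrite !inE; case: (H m) => ->; rewrite eqxx ?orbT.
by have := cards2 k j; rewrite -e cardsT card_ord => ->; move/eqP/negbTE: hkj => ->.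
Qed.

Section Separated.
Variables p q l : nat.
Hypotheses (hp : (2 <= p)%N) (hq : (2 <= q)%N).
Variable W : 'I_l -> pset p q.
Hypotheses (hdist : forall i j, i <> j -> ~ set_eq (W i) (W j))
  (hne : forall i, exists x, W i x) (htype : forall i, intersection_type (W i)).
Variables U1 U2 : pset p q.
Hypotheses (o1 : is_open U1) (o2 : is_open U2)
  (hcov : forall x, union_fam W x -> U1 x \/ U2 x)
  (hn1 : exists x, union_fam W x /\ U1 x) (hn2 : exists x, union_fam W x /\ U2 x)
  (hdis : forall x, union_fam W x -> U1 x -> U2 x -> False).

Let hp0 : (0 < p)%N. Proof. exact: leq_trans hp. Qed.
Let hq0 : (0 < q)%N. Proof. exact: leq_trans hq. Qed.

Definition in_U1 i := forall x, W i x -> U1 x.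
Definition opposite i j := in_U1 i /\ ~ in_U1 j \/ ~ in_U1 i /\ in_U1 j.

Lemma in_U1_or_U2 i : in_U1 i \/ forall x, W i x -> U2 x.
Proof.
apply: (unsplittable_intersection_type hp hq (htype i) (hne i)) => // x hx.
  by apply: hcov; exists i.
by apply: hdis; exists i.
Qed.

Lemma opposite_disjoint i j : opposite i j -> ~ meets (W i) (W j).
Proof.
wlog [hi hj] : i j / in_U1 i /\ ~ in_U1 j.
  move=> H [h|h] hm; first exact: H (or_introl h) hm.
  by apply: (H j i); [tauto | left; tauto | apply: meets_sym].
move=> _ [z [zi zj]]; case: (in_U1_or_U2 j) => // hj2.
by apply: (hdis (x := z)); [exists i | apply: hi | apply: hj2].
Qed.

Lemma exists_in_U1 : exists i, in_U1 i.
Proof.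
case: hn1 => x [[i hi] hx]; exists i.
case: (in_U1_or_U2 i) => // h; exfalso.
by apply: (hdis (x := x)) => //; [exists i | apply: h].
Qed.

Lemma exists_not_in_U1 : exists i, ~ in_U1 i.
Proof.
case: hn2 => x [[i hi] hx]; exists i => h.
by apply: (hdis (x := x)) => //; [exists i | apply: h].
Qed.

Lemma exists_opposite k : exists j, opposite k j.
Proof.
case: (classic (in_U1 k)) => hk.
  by case: exists_not_in_U1 => j hj; exists j; left.
by case: exists_in_U1 => j hj; exists j; right.
Qed.

Lemma opposite_or i j m : opposite i j -> opposite m j \/ opposite m i.
Proof. by rewrite /opposite; case: (classic (in_U1 m)); tauto. Qed.

Lemma opposite_neq i j : opposite i j -> i <> j.
Proof. by rewrite /opposite => h E; subst; tauto. Qed.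

Lemma set_eq_index i j : set_eq (W i) (W j) -> i = j.
Proof. by move=> h; apply: NNPP => /hdist. Qed.

Lemma two_pieces (X Y : pset p q) k : set_eq (W k) X ->
  (forall Z, intersection_type Z -> ~ meets X Z -> set_eq Z Y) ->
  (forall Z, intersection_type Z -> ~ meets Y Z -> set_eq Z X) ->
  l = 2%N /\ exists j, j <> k /\ set_eq (W j) Y.
Proof.
move=> hk hX hY; have [j hj] := exists_opposite k.
have hjY : set_eq (W j) Y.
  by apply: hX (htype j) _ => /(meets_set_eql hk); apply: opposite_disjoint.
have every m : m = k \/ m = j.
  case: (opposite_or m hj) => hm; [left | right]; apply: set_eq_index.
    apply: set_eq_trans (set_eq_sym hk); apply: hY (htype m) _ => hmY.
    by apply: (opposite_disjoint hm); apply: meets_sym; apply: meets_set_eql hjY hmY.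
  apply: set_eq_trans (set_eq_sym hjY); apply: hX (htype m) _ => hmX.
  by apply: (opposite_disjoint hm); apply: meets_sym; apply: meets_set_eql hk hmX.
split; first exact: card_ord_two (opposite_neq hj) every.
by exists j; split => //; apply: nesym; apply: opposite_neq.
Qed.

Lemma opposite_cones_of_cone_piece k a :
  set_eq (W k) (translate a (@US p q)) \/ set_eq (W k) (translate a (@UT p q)) ->
  opposite_cones W.
Proof.
case=> hk.
  have [hl [j [hjk hj]]] :=
    two_pieces hk (disjoint_US hp0 hq0 (a := a)) (disjoint_UT hp0 hq0 (a := a)).
  by split => //; exists k, j, a; split => //; apply: nesym.
have [hl [j [hjk hj]]] :=
  two_pieces hk (disjoint_UT hp0 hq0 (a := a)) (disjoint_US hp0 hq0 (a := a)).
by split => //; exists j, k, a.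
Qed.

Lemma halfspace_normal_form :
  (forall k, exists v alpha, cone v /\ v <> @vzero p q /\ set_eq (W k) (Hset v alpha)) ->
  exists v0, cone v0 /\ v0 <> @vzero p q /\ forall k, exists beta,
    (in_U1 k -> set_eq (W k) (Hset v0 beta)) /\
    (~ in_U1 k -> set_eq (W k) (Hset (vopp v0) (- beta))).
Proof.
move=> halfspace.
have [s0 hs0] := exists_in_U1; have [t0 ht0] := exists_not_in_U1.
have [v0 [a0 [hc0 [hv0 hW0]]]] := halfspace s0.
have disjoint_s0 k : opposite s0 k -> ~ meets (Hset v0 a0) (W k).
  by move=> hk /(meets_set_eql hW0); apply: opposite_disjoint.
have [c1 [b1 [hc1 hWt0]]] :=
  disjoint_Hset hc0 hv0 (htype t0) (disjoint_s0 t0 (or_introl (conj hs0 ht0))).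
exists v0; split => //; split => // k.
case: (classic (in_U1 k)) => hk.
  have hv1 : vscale c1 v0 <> @vzero p q by apply: vscale_neq0 => //; lra.
  have [c2 [b2 [hc2 hWk]]] := disjoint_Hset (cone_vscale c1 hc0) hv1 (htype k)
    (fun h => opposite_disjoint (or_intror (conj ht0 hk)) (meets_set_eql hWt0 h)).
  exists (b2 / (c2 * c1)); split => // _.
  by apply: set_eq_trans hWk _; rewrite vscale_vscale; apply: Hset_scale_pos; nra.
have [c2 [b2 [hc2 hWk]]] := disjoint_Hset hc0 hv0 (htype k)
  (disjoint_s0 k (or_introl (conj hs0 hk))).
exists (b2 / c2); split => // _.
by apply: set_eq_trans hWk _; apply: Hset_scale_neg.
Qed.

Definition in_U1b i : bool := if excluded_middle_informative (in_U1 i) then true else false.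

Lemma in_U1bP i : in_U1b i <-> in_U1 i.
Proof. by rewrite /in_U1b; case: excluded_middle_informative. Qed.

Lemma in_U1bN i : ~~ in_U1b i <-> ~ in_U1 i.
Proof. by rewrite /in_U1b; case: excluded_middle_informative. Qed.

Section NormalForm.
Variables (v0 : pt p q) (beta : 'I_l -> R).
Hypotheses (hc0 : cone v0) (hv0 : v0 <> @vzero p q)
  (hbeta : forall k, (in_U1 k -> set_eq (W k) (Hset v0 (beta k))) /\
                     (~ in_U1 k -> set_eq (W k) (Hset (vopp v0) (- beta k)))).

Lemma normal_form_cross s t : in_U1b s -> ~~ in_U1b t -> beta t <= beta s.
Proof.
move=> /in_U1bP hs /in_U1bN ht; apply: Rnot_lt_le => hlt.
apply: (opposite_disjoint (or_introl (conj hs ht))).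
apply: (meets_set_eql ((hbeta s).1 hs)); apply: (meets_set_eqr ((hbeta t).2 ht)).
exact: meets_Hset_opp.
Qed.

Lemma normal_form_injS s s' : in_U1b s -> in_U1b s' -> s <> s' -> beta s <> beta s'.
Proof.
move=> /in_U1bP hs /in_U1bP hs' hss E; apply/hss/set_eq_index.
by apply: set_eq_trans ((hbeta s).1 hs) _; rewrite E; apply/set_eq_sym/(hbeta s').1.
Qed.

Lemma normal_form_injT t t' : ~~ in_U1b t -> ~~ in_U1b t' -> t <> t' -> beta t <> beta t'.
Proof.
move=> /in_U1bN ht /in_U1bN ht' htt E; apply/htt/set_eq_index.
by apply: set_eq_trans ((hbeta t).2 ht) _; rewrite E; apply/set_eq_sym/(hbeta t').2.
Qed.

Lemma nested_halfspaces_of_normal_form : nested_halfspaces W.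
Proof.
have hS : exists s, in_U1b s by case: exists_in_U1 => s /in_U1bP; exists s.
have hT : exists t, ~~ in_U1b t by case: exists_not_in_U1 => t /in_U1bN; exists t.
have [alpha [k [sigma [hk1 hk2 hbij hstep hsigma]]]] :=
  block_sort normal_form_cross normal_form_injS normal_form_injT hS hT.
exists v0, alpha, k, sigma.
refine (conj hc0 (conj hv0 (conj hk1 (conj hk2 (conj hbij (conj hstep _)))))) => i.
have [-> hside] := hsigma i; case: (boolP (i < k)%N) => hi.
  by apply: (hbeta _).1; apply/in_U1bP; rewrite hside.
by apply: (hbeta _).2; apply/in_U1bN; rewrite hside.
Qed.

End NormalForm.

Lemma separated_family : nested_halfspaces W \/ opposite_cones W.
Proof.
have [[k [a hk]]|no_cone] := classic (exists k a, set_eq (W k) (translate a (@US p q)) \/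
                                         set_eq (W k) (translate a (@UT p q))).
  by right; exact: opposite_cones_of_cone_piece hk.
have halfspace k : exists v alpha, cone v /\ v <> @vzero p q /\ set_eq (W k) (Hset v alpha).
  by case: (htype k) => [[a ha]|[[a ha]|//]]; case: no_cone; exists k, a; [left | right].
have [v0 [hc0 [hv0 hform]]] := halfspace_normal_form halfspace.
have [beta hbeta] : exists beta : 'I_l -> R, forall k,
    (in_U1 k -> set_eq (W k) (Hset v0 (beta k))) /\
    (~ in_U1 k -> set_eq (W k) (Hset (vopp v0) (- beta k))).
  exists (fun k => proj1_sig (constructive_indefinite_description _ (hform k))) => k.
  exact: proj2_sig (constructive_indefinite_description _ (hform k)).
by left; exact: nested_halfspaces_of_normal_form hc0 hv0 hbeta.
Qed.

End Separated.

Unset Implicit Arguments.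

Theorem lemma5p10 (p q l : nat) (hp : (2 <= p)%N) (hpq : (p <= q)%N)
  (W : 'I_l -> pset p q)
  (hdist : forall i j, i <> j -> ~ set_eq (W i) (W j))
  (hne : forall i, exists x, W i x)
  (hopen : forall i, is_open (W i))
  (htype : forall i, intersection_type (W i)) :
  ~ is_connected (union_fam W) <->
  ( (exists (v : pt p q) (alpha : 'I_l -> R) (k0 : nat) (sigma : 'I_l -> 'I_l),
       cone v /\ v <> @vzero p q /\
       (1 <= k0)%N /\ (k0 <= l - 1)%N /\ bijective sigma /\
       (forall i j : 'I_l, nat_of_ord j = (nat_of_ord i).+1 ->
          if (nat_of_ord j == k0)%N then alpha i >= alpha j else alpha i > alpha j) /\
       (forall i : 'I_l,
          if (i < k0)%N then set_eq (W (sigma i)) (Hset v (alpha i))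
          else set_eq (W (sigma i)) (Hset (vopp v) (- alpha i))))
    \/
    (l = 2%N /\ exists (i j : 'I_l) (v : pt p q),
       i <> j /\ set_eq (W i) (translate v (@US p q)) /\
       set_eq (W j) (translate v (@UT p q))) ).
Proof.
have hq : (2 <= q)%N := leq_trans hp hpq.
split=> [/NNPP [U1 [U2 [o1 [o2 [hcov [hn1 [hn2 hdis]]]]]]]|[hnested|hcones]].
- exact: (separated_family hp hq hdist hne htype o1 o2 hcov hn1 hn2 hdis).
- exact: (nested_halfspaces_disconnected hne hopen hnested).
- exact: (opposite_cones_disconnected hne hopen hcones).
Qed.
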